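(* Let $G$ be a finite simple undirected graph with adjacency matrix $A=\sum_{r=0}^d\theta_rE_r$ (spectral decomposition), let $a,b$ be vertices, let $w_1,\dots,w_k$ and integers $f^r_\ell$ be as in the context, so that $\theta_r=\sum_{\ell=1}^k f^r_\ell w_\ell$, and define $F:\mathbb{T}^k\to\mathbb{C}$ by $F(\overline{z})=\sum_{r=0}^d\langle a|E_r|b\rangle\,e^{\mathrm{i} f^r(\overline{z})}$. Then for every integer $\ell\ge1$ the number \[\frac{1}{(2\pi)^{k}}\int_{\mathbb{T}^k}|F(\overline{z})|^{2\ell}\,\mathrm{d}\overline{z}\] is rational.
   Context: Here $\theta_0,\dots,\theta_d$ are the distinct eigenvalues of $A$ and $E_r$ is the orthogonal projection onto the $\theta_r$-eigenspace. Fix real numbers $w_1,\dots,w_k$ that are linearly independent over $\mathbb{Q}$ and such that every $\theta_r$ is an integer linear combination $\theta_r=\sum_{\ell=1}^k f^r_\ell w_\ell$ with $f^r_\ell\in\mathbb{Z}$. For $\overline{z}=(z_1,\dots,z_k)$ write $f^r(\overline{z})=\sum_{\ell=1}^k f^r_\ell z_\ell$. $\mathbb{T}^k=\mathbb{R}^k/2\pi\mathbb{Z}^k$ is the $k$-torus with Lebesgue measure $\mathrm{d}\overline{z}$, of total volume $(2\pi)^k$. *)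

From HB Require Import structures.
From mathcomp Require Import all_boot all_order all_algebra.
From mathcomp Require Import all_classical all_reals all_analysis.
From mathcomp Require Import complex.
Set Implicit Arguments. Unset Strict Implicit. Unset Printing Implicit Defensive.
Import Order.TTheory GRing.Theory Num.Theory.
Local Open Scope ring_scope.
Local Open Scope classical_set_scope.

Definition simple_graph (n : nat) (e : rel 'I_n) : Prop :=
  (forall x y, e x y = e y x) /\ (forall x, ~~ e x x).

Definition adjmx (R : nzRingType) (n : nat) (e : rel 'I_n) : 'M[R]_n :=
  \matrix_(i, j) (e i j)%:R.

Definition Q_lin_indep (R : realType) (k : nat) (w : 'I_k -> R) : Prop :=
  forall c : 'I_k -> rat, \sum_(l < k) ratr (c l) * w l = 0 -> forall l, c l = 0.

Definition orth_proj (R : fieldType) (n : nat) (E U : 'M[R]_n) : Prop :=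
  E^T = E /\ E *m E = E /\ (E == U)%MS.

Fixpoint torus_int (R : realType) (k : nat) (g : seq R -> R) : R :=
  match k with
  | 0 => g [::]
  | k'.+1 => Rintegral (@lebesgue_measure R) `[0, pi *+ 2]%classic
               (fun x => torus_int k' (fun s => g (x :: s)))
  end.

Definition expi (R : realType) (t : R) : R[i] := (cos t +i* sin t)%C.

Definition cmod (R : realType) (z : R[i]) : R := ComplexField.Normc.normc z.

(* Expanding |F|^(2l) = F^l conj(F)^l writes the integrand as a finite sum of
   terms E_(r_1)(a,b) ... E_(r_2l)(a,b) cos (m . z), whose integer frequency
   vector m = f^(r_1) + ... + f^(r_l) - f^(r_(l+1)) - ... - f^(r_2l) is a signed
   sum of the f^r.  Integration over the torus keeps exactly the terms with
   m = 0, i.e., by Q-linear independence of the w's, those whose signed sum of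
   eigenvalues theta vanishes.  This remaining sum is rational: the theta_r are
   roots of the rational characteristic polynomial of A, so the finitely many
   signed sums are algebraic and the indicator of 0 agrees on them with a
   rational polynomial; a rational polynomial in the signed sum in turn
   expands into rational combinations of the moments
   sum_r E_r(a,b) theta_r^c = (A^c)_(a,b). *)

From HB Require Import structures.
From mathcomp Require Import all_boot all_order all_algebra.
From mathcomp Require Import all_classical all_reals all_analysis.
From mathcomp Require Import complex.
From mathcomp Require Import ring.
Set Implicit Arguments. Unset Strict Implicit. Unset Printing Implicit Defensive.
Import Order.TTheory GRing.Theory Num.Theory.
Import numFieldNormedType.Exports.
Local Open Scope ring_scope.

Lemma periodicz (U V : zmodType) (f : U -> V) (T : U) :
  periodic f T -> forall (n : int) a, f (a + T *~ n) = f a.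
Proof.
move=> fT [] m a; first exact: periodicn.
by rewrite NegzE mulrNz -[in RHS](subrK (T *~ m.+1) a) periodicn.
Qed.

Section TorusIntegral.
Variable R : realType.
Notation mu := (@lebesgue_measure R).
Local Open Scope classical_set_scope.

Lemma continuous_affine (c phi : R) : continuous (fun y => c * y + phi).
Proof.
move=> y; apply: continuousD; last exact: cst_continuous.
by apply: continuousM; first exact: cst_continuous.
Qed.

Lemma continuous_cos_affine (c phi : R) : continuous (fun y => cos (c * y + phi)).
Proof.
by move=> y; apply: continuous_comp; [exact: continuous_affine | exact: continuous_cos].
Qed.

Lemma is_derive_affine (c phi x : R) : is_derive x 1 (fun y => c * y + phi) c.
Proof.
have D : is_derive x 1 (c \*: id + cst phi) (c *: (1 : R) + 0).
  exact: is_deriveD.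
apply: is_derive_eq D _; rewrite addr0; exact: mulr1.
Qed.

Lemma Rintegral_cos_affine (n : int) (phi : R) :
  \int[mu]_(x in `[0, pi *+ 2]) cos (n%:~R * x + phi) =
  (n == 0)%:R * (pi *+ 2 * cos phi).
Proof.
have pi2_gt0 : (0 : R) < pi *+ 2 by rewrite mulrn_wgt0 // pi_gt0.
have [->|n0] := eqVneq n 0.
  under eq_Rintegral do rewrite mul0r add0r.
  rewrite Rintegral_cst //= lebesgue_measure_itv /= lte_fin pi2_gt0 /= subr0.
  by rewrite mul1r mulrC.
have nR0 : (n%:~R : R) != 0 by rewrite intr_eq0.
pose F := fun y : R => n%:~R^-1 * sin (n%:~R * y + phi).
have dF (x : R) : is_derive x (1 : R) F (cos (n%:~R * x + phi)).
  apply: is_derive_eq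
    (is_deriveZ _ (is_derive1_comp (is_derive_sin _) (is_derive_affine _ _ x))) _.
  by rewrite [LHS]mulrCA mulVf // mulr1.
have cF : continuous F.
  by move=> y; have [/derivable1_diffP/differentiable_continuous] := dF y.
rewrite mul0r /Rintegral.
rewrite (@continuous_FTC2 R (fun x => cos (n%:~R * x + phi)) F _ _ pi2_gt0) /=.
- rewrite /F mulr0 add0r [_ * (pi *+ 2)]mulrC mulrzr [_ *~ n + _]addrC.
  by rewrite (periodicz (@sinD2pi R)) subrr.
- by apply: continuous_in_subspaceT => x _; exact: continuous_cos_affine.
- split; first by move=> x _; exact: ex_derive.
  + exact: cvg_at_right_filter (cF 0).
  + exact: cvg_at_left_filter (cF _).
- by move=> x _; rewrite derive1E derive_val.
Qed.

Lemma continuous_sum (I : Type) (s : seq I) (f : I -> R -> R) :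
  (forall i, continuous (f i)) -> continuous (fun x => \sum_(i <- s) f i x).
Proof.
move=> cf; elim: s => [|i s IH].
  by under eq_fun do rewrite big_nil; exact: cst_continuous.
under eq_fun do rewrite big_cons.
by move=> x; apply: continuousD; [exact: cf | exact: IH].
Qed.

Lemma Rintegral_sum_cos_affine (T : Type) (s : seq T) (a : T -> R) (m : T -> int)
    (ph : T -> R) :
  \int[mu]_(x in `[0, pi *+ 2]) \sum_(t <- s) a t * cos ((m t)%:~R * x + ph t) =
  \sum_(t <- s) a t * (m t == 0)%:R * (pi *+ 2 * cos (ph t)).
Proof.
have integrable_cont (f : R -> R) :
    continuous f -> mu.-integrable `[0, pi *+ 2] (EFin \o f).
  move=> cf; apply: continuous_compact_integrable; first exact: segment_compact.
  by apply: continuous_in_subspaceT => x _; exact: cf.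
have cont_term t : continuous (fun x : R => a t * cos ((m t)%:~R * x + ph t)).
  by move=> x; apply: continuousM; [exact: cst_continuous | exact: continuous_cos_affine].
elim: s => [|t s IH].
  by under eq_Rintegral do rewrite big_nil; rewrite Rintegral_cst //= mul0r big_nil.
under eq_Rintegral do rewrite big_cons.
rewrite RintegralD //; last 2 first.
- exact: integrable_cont.
- exact/integrable_cont/continuous_sum.
rewrite IH big_cons RintegralZl ?Rintegral_cos_affine ?mulrA //.
exact/integrable_cont/continuous_cos_affine.
Qed.

Lemma torus_int_sum_cos (k : nat) (T : Type) (s : seq T) (a : T -> R)
    (m : T -> 'I_k -> int) (ph : T -> R) :
  torus_int k (fun z => \sum_(t <- s) a t *
      cos (\sum_(j < k) (m t j)%:~R * nth 0 z j + ph t)) =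
  (pi *+ 2) ^+ k * \sum_(t <- s) a t * (\prod_(j < k) (m t j == 0)%:R) * cos (ph t).
Proof.
elim: k m ph => [|k IH] m ph /=.
  by rewrite mul1r; apply: eq_bigr => t _; rewrite big_ord0 add0r big_ord0 mulr1.
have inner x : torus_int k (fun z => \sum_(t <- s) a t *
      cos (\sum_(j < k.+1) (m t j)%:~R * nth 0 (x :: z) j + ph t)) =
    \sum_(t <- s) ((pi *+ 2) ^+ k * a t * \prod_(j < k) (m t (lift ord0 j) == 0)%:R) *
      cos ((m t ord0)%:~R * x + ph t).
  transitivity (torus_int k (fun z => \sum_(t <- s) a t *
      cos (\sum_(j < k) (m t (lift ord0 j))%:~R * nth 0 z j +
           ((m t ord0)%:~R * x + ph t)))).
    congr torus_int; apply: funext => z; apply: eq_bigr => t _.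
    rewrite big_ord_recl /=; under eq_bigr do rewrite add0n.
    by rewrite addrAC addrC.
  rewrite (IH (fun t j => m t (lift ord0 j)) (fun t => (m t ord0)%:~R * x + ph t)).
  by rewrite big_distrr /=; apply: eq_bigr => t _; rewrite !mulrA.
under eq_Rintegral do rewrite inner.
rewrite Rintegral_sum_cos_affine exprS -mulrA !big_distrr /=; apply: eq_bigr => t _.
rewrite big_ord_recl /=; ring.
Qed.
End TorusIntegral.

Section DiscreteConvolution.
Variables (I : finType) (R : comPzRingType) (x : I -> R).

(* [dconv x g cs G] integrates [G] against the convolution, over [c] in [cs],
   of the discrete measures [sum_r x r * delta_(g r *~ c)]. *)
Fixpoint dconv (V : zmodType) (g : I -> V) (cs : seq int) (G : V -> R) : R :=
  if cs is c :: cs' then \sum_r x r * dconv g cs' (fun v => G (g r *~ c + v))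
  else G 0.

Lemma dconvZ (V : zmodType) (g : I -> V) cs a G :
  dconv g cs (fun v => a * G v) = a * dconv g cs G.
Proof.
elim: cs G => [|c cs IH] G //=; rewrite mulr_sumr.
by apply: eq_bigr => r _; rewrite IH mulrCA.
Qed.

Lemma dconv_sum (V : zmodType) (g : I -> V) cs (J : Type) (s : seq J)
    (G : J -> V -> R) :
  dconv g cs (fun v => \sum_(j <- s) G j v) = \sum_(j <- s) dconv g cs (G j).
Proof.
elim: cs G => [|c cs IH] G //=.
under eq_bigr do rewrite IH mulr_sumr.
by rewrite exchange_big.
Qed.

Lemma dconv_comp (V W : zmodType) (h : {additive V -> W}) (g : I -> V) cs
    (G : W -> R) :
  dconv (h \o g) cs G = dconv g cs (G \o h).
Proof.
elim: cs G => [|c cs IH] G /=; first by rewrite raddf0.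
apply: eq_bigr => r _; rewrite IH; congr (_ * dconv _ _ _).
by apply: funext => v /=; rewrite raddfD raddfMz.
Qed.

Lemma dconv_morph (V : zmodType) (g : I -> V) cs (G : V -> R) :
  G 0 = 1 -> {morph G : u v / u + v >-> u * v} ->
  dconv g cs G = \prod_(c <- cs) \sum_r x r * G (g r *~ c).
Proof.
move=> G0 GD; elim: cs => [|c cs IH] /=; first by rewrite big_nil.
rewrite big_cons mulr_suml; apply: eq_bigr => r _.
under [X in dconv _ _ X]funext do rewrite GD.
by rewrite dconvZ IH mulrA.
Qed.

Lemma dconv_expand (V : zmodType) (g : I -> V) cs (P : V -> Prop) :
  P 0 -> (forall r c v, P v -> P (g r *~ c + v)) ->
  exists s : seq (R * V), (forall p, p \in s -> P p.2) /\
    forall G, dconv g cs G = \sum_(p <- s) p.1 * G p.2.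
Proof.
move=> P0 PS; elim: cs => [|c cs [s [sP sE]]].
  exists [:: (1, 0)]; split=> [p|G]; last by rewrite big_seq1 mul1r.
  by rewrite inE => /eqP ->.
exists [seq (x r * p.1, g r *~ c + p.2) | r <- enum I, p <- s]; split.
  by move=> _ /allpairsP [[r p] [_ ps ->]] /=; apply/PS/sP.
move=> G /=; rewrite big_allpairs_dep big_enum /=; apply: eq_bigr => r _.
by rewrite sE mulr_sumr; apply: eq_bigr => p _; rewrite mulrA.
Qed.

End DiscreteConvolution.

Section ComplexModulus.
Variables (R : realType) (I : finType) (x : I -> R).
Local Open Scope complex_scope.

Lemma expi0 : expi (0 : R) = 1.
Proof. by rewrite /expi cos0 sin0. Qed.

Lemma expiD (u v : R) : expi (u + v) = expi u * expi v.
Proof.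
rewrite /expi cosD sinD; apply/eqP; rewrite eq_complex /=.
by apply/andP; split; apply/eqP; ring.
Qed.

Lemma expiN (u : R) : expi (- u) = (expi u)^*.
Proof. by rewrite /expi cosN sinN. Qed.

Lemma mulcJ_cmod (z : R[i]) : z * z^* = (cmod z ^+ 2)%:C.
Proof.
case: z => a b; rewrite /cmod /= sqr_sqrtr ?addr_ge0 ?sqr_ge0 //.
by apply/eqP; rewrite eq_complex /=; apply/andP; split; apply/eqP; ring.
Qed.

Lemma Re_dconv (V : zmodType) (g : I -> V) cs (G : V -> R[i]) :
  complex.Re (dconv (fun r => (x r)%:C) g cs G) =
  dconv x g cs (fun v => complex.Re (G v)).
Proof.
elim: cs G => [|c cs IH] G //=.
have ReD : {morph @complex.Re R : u v / u + v} by case=> ? ? [].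
rewrite (big_morph _ ReD (_ : complex.Re 0 = 0)) //; apply: eq_bigr => r _.
by rewrite -IH; case: (dconv _ _ _ _) => ? ? /=; rewrite mul0r subr0.
Qed.

Lemma cmodX_sum_expi (phi : I -> R) (l : nat) :
  cmod (\sum_r (x r)%:C * expi (phi r)) ^+ (2 * l) =
  dconv x phi (nseq l 1 ++ nseq l (-1)) cos.
Proof.
set z := \sum_r _.
have -> : cos = (fun t => complex.Re (expi t)) by [].
rewrite -Re_dconv (dconv_morph _ _ _ expi0 expiD).
rewrite big_cat /= !big_nseq !iter_mulr_1.
have -> : \sum_r (x r)%:C * expi (phi r *~ -1) = z^*.
  rewrite rmorph_sum; apply: eq_bigr => r _.
  by rewrite mulrN1z expiN rmorphM /= oppr0.
under eq_bigr do rewrite mulr1z.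
by rewrite -/z -exprMn mulcJ_cmod -rmorphXn exprM.
Qed.
End ComplexModulus.

Section RationalSubring.
Variable R : numFieldType.

Definition rational : {pred R} := fun y => `[< exists q : rat, y = ratr q >].

Lemma rational_subring_closed : subring_closed rational.
Proof.
split=> [|_ _ /asboolP[p ->] /asboolP[q ->]|_ _ /asboolP[p ->] /asboolP[q ->]];
  apply/asboolP; first by exists 1; rewrite rmorph1.
  by exists (p - q); rewrite rmorphB.
by exists (p * q); rewrite rmorphM.
Qed.

HB.instance Definition _ := GRing.isSubringClosed.Build R rational
  rational_subring_closed.

Lemma rational_ratr q : ratr q \in rational.
Proof. by apply/asboolP; exists q. Qed.

End RationalSubring.
Arguments rational {R}.

Lemma rat_poly_indicator0 (R : numFieldType) (L : seq R) :
  (forall y, y \in L -> algebraicOver ratr y) ->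
  exists q : {poly rat}, {in L, forall y, (map_poly ratr q).[y] = (y == 0)%:R}.
Proof.
move=> algL; suff [q [q0 qL]] : exists q : {poly rat},
    (map_poly ratr q).[0] = 1 :> R /\
    {in L, forall y, y != 0 -> (map_poly ratr q).[y] = 0}.
  by exists q => y yL; have [->|/qL->] := eqVneq y 0.
elim: L algL => [|y L IH] algL.
  by exists 1; rewrite rmorph1 hornerC.
have [q [q0 qL]] : exists q : {poly rat}, (map_poly ratr q).[0] = 1 :> R /\
    {in L, forall y, y != 0 -> (map_poly ratr q).[y] = 0}.
  by apply: IH => z zL; apply: algL; rewrite inE zL orbT.
have [y0|y_neq0] := eqVneq y 0.
  by exists q; split=> // z; rewrite inE => /orP[/eqP->|/qL//]; rewrite y0 eqxx.
have [p p_neq0 py] := algL y (mem_head y L).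
have [m [h]] := multiplicity_XsubC p 0; rewrite p_neq0 /= subr0 => h0 Dp.
have hy : (map_poly ratr h).[y] = 0 :> R.
  move: py; rewrite Dp rmorphM rmorphXn /= map_polyX rootM => /orP[/rootP //|].
  by rewrite rootE hornerXn expf_eq0 (negPf y_neq0) andbF.
have hE z : (map_poly ratr (q * h * (h.[0])^-1%:P)).[z] =
    (map_poly ratr q).[z] * (map_poly ratr h).[z] * ratr (h.[0])^-1 :> R.
  by rewrite !rmorphM /= map_polyC !hornerM hornerC.
exists (q * h * (h.[0])^-1%:P); split.
  rewrite hE q0 mul1r -(rmorph0 ratr) horner_map -rmorphM mulfV ?rmorph1 //.
move=> z; rewrite inE => /orP[/eqP->|zL z_neq0]; first by rewrite hE hy mulr0 mul0r.
by rewrite hE qL // !mul0r.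
Qed.

Section RationalMoments.
Variables (R : numFieldType) (I : finType) (x theta : I -> R).
Hypothesis moment_rational : forall c, \sum_r x r * theta r ^+ c \in rational.

Lemma dconvX_rational cs p : dconv x theta cs (fun y => y ^+ p) \in rational.
Proof.
elim: cs p => [|c cs IH] p /=; first by rewrite expr0n rpred_nat.
have binomial r : dconv x theta cs (fun y => (theta r *~ c + y) ^+ p) =
    \sum_(i < p.+1) (c%:~R ^+ (p - i) *+ 'C(p, i) *
      dconv x theta cs (fun y => y ^+ i)) * theta r ^+ (p - i).
  under [X in dconv _ _ _ X]funext do rewrite exprDn.
  rewrite dconv_sum; apply: eq_bigr => i _.
  under [X in dconv _ _ _ X]funext do rewrite -mulrnAl.
  by rewrite dconvZ -mulrzr exprMn; ring.
under eq_bigr do rewrite binomial mulr_sumr.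
rewrite exchange_big rpred_sum // => i _.
under eq_bigr do rewrite mulrCA.
by rewrite -mulr_sumr rpredM // rpredM ?rpredMn ?rpredX ?rpred_int.
Qed.

Lemma dconv_poly_rational cs (q : {poly rat}) :
  dconv x theta cs (fun y => (map_poly ratr q).[y]) \in rational.
Proof.
under [X in dconv _ _ _ X]funext do rewrite horner_coef size_map_poly.
rewrite dconv_sum rpred_sum // => i _.
under [X in dconv _ _ _ X]funext do rewrite coef_map.
by rewrite dconvZ rpredM ?rational_ratr ?dconvX_rational.
Qed.

Hypothesis theta_algebraic : forall r, algebraicOver ratr (theta r).

Lemma dconv_eq0_rational cs : dconv x theta cs (fun y => (y == 0)%:R) \in rational.
Proof.
have alg_step r c v :
    algebraicOver ratr v -> algebraicOver ratr (theta r *~ c + v).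
  apply: algebraic_add; rewrite -mulrzr -(ratr_int _ c).
  exact/algebraic_mul/algebraic_id.
have [s [s_alg sE]] := dconv_expand x cs (algebraic0 _) alg_step.
have [q qE] : exists q : {poly rat},
    {in map snd s, forall y, (map_poly ratr q).[y] = (y == 0)%:R}.
  by apply: rat_poly_indicator0 => _ /mapP[p ps ->]; exact: s_alg.
rewrite sE (eq_big_seq (fun p => p.1 * (map_poly ratr q).[p.2])) -?sE.
  exact: dconv_poly_rational.
by move=> p ps; rewrite qE // map_f.
Qed.

End RationalMoments.

Lemma symmetric_diagonalizable (R : rcfType) n (A : 'M[R]_n.+1) :
  A^T = A -> diagonalizable A.
Proof.
move=> symA; pose f := real_complex R; pose Ac := map_mx f A.
have Ac_herm : Ac \is hermsymmx.
  apply: realsym_hermsym.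
    apply/is_hermitianmxP.
    by rewrite expr0 scale1r map_mx_id // /Ac map_trmx symA.
  by apply/mxOverP => i j; rewrite mxE realE !lecE /= eqxx le_total.
have /orthomx_spectralP Ac_eq := hermitian_normalmx Ac_herm.
have D_real := hermitian_spectral_diag_real Ac_herm.
set P := spectralmx Ac in Ac_eq; set D := spectral_diag Ac in Ac_eq D_real.
have D_re i : D 0 i = f (complex.Re (D 0 i)).
  have := mxOverP D_real 0 i; case: (D 0 i) => a b.
  rewrite realE !lecE /= => /orP[] /andP[/eqP b0 _];
    by [rewrite b0 | rewrite -b0].
pose rs := undup [seq complex.Re (D 0 i) | i <- enum 'I_n.+1].
apply/diagonalizableP; exists rs; first exact: undup_uniq.
apply: mxminpoly_min; apply: (@map_mx_inj _ _ f).
rewrite map_horner_mx map_mx0 -/Ac Ac_eq -{2}(invmxK P).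
rewrite horner_mx_uconj ?unitmx_inv ?spectral_unit // horner_mx_diag.
suff -> : (D ^ horner (map_poly f (\prod_(x <- rs) ('X - x%:P))))%sesqui = 0.
  by rewrite linear0 mulmx0 mul0mx.
apply/rowP => i; rewrite !mxE D_re horner_map (rootP _) ?rmorph0 //.
by rewrite root_prod_XsubC mem_undup; apply/mapP; exists i; rewrite ?mem_enum.
Qed.

Section SpectralDecomposition.
Variables (R : rcfType) (n d : nat) (A : 'M[R]_n.+1) (theta : 'I_d.+1 -> R)
  (E : 'I_d.+1 -> 'M[R]_n.+1).
Hypotheses (symA : A^T = A) (theta_inj : injective theta)
  (theta_all : forall t, eigenvalue A t -> exists r, theta r = t)
  (E_proj : forall r, orth_proj (E r) (eigenspace A (theta r))).

Lemma eigenproj_mulmx r : E r *m A = theta r *: E r.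
Proof. by have [_ [_ /andP[/eigenspaceP]]] := E_proj r. Qed.

Lemma mulmx_eigenproj r : A *m E r = theta r *: E r.
Proof.
have [Et _] := E_proj r.
by rewrite -[A]symA -[E r]Et -trmx_mul eigenproj_mulmx linearZ /= Et.
Qed.

Lemma eigenspace_mulmx_eigenproj m (V : 'M[R]_(m, n.+1)) s r :
  (V <= eigenspace A (theta s))%MS -> V *m E r = if r == s then V else 0.
Proof.
move=> Vs; have VA : V *m A = theta s *: V by apply/eigenspaceP.
case: eqP => [->|/eqP r_neq_s].
  have [_ [Eidem /andP[_ sE]]] := E_proj s.
  by have /submxP[D ->] := submx_trans Vs sE; rewrite -mulmxA Eidem.
have : (theta s - theta r) *: (V *m E r) = 0.
  by rewrite scalerBl scalemxAl -VA scalemxAr -mulmx_eigenproj mulmxA subrr.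
move/eqP; rewrite scalemx_eq0 subr_eq0 => /orP[/eqP/theta_inj/eqP|/eqP//].
by rewrite eq_sym (negPf r_neq_s).
Qed.

Lemma sum_eigenproj : \sum_r E r = 1%:M.
Proof.
have /diagonalizablePeigen[rs _ rsE] := symmetric_diagonalizable symA.
suff : (1%:M <= kermx (\sum_r E r - 1%:M))%MS.
  by move/sub_kermxP; rewrite mul1mx => /eqP; rewrite subr_eq0 => /eqP.
rewrite -rsE; elim: rs {rsE} => [|t rs IH]; first by rewrite big_nil sub0mx.
rewrite big_cons addsmx_sub IH andbT; apply/sub_kermxP.
have [/theta_all[s <-]|not_ev] := boolP (eigenvalue A t); last first.
  by move: not_ev; rewrite /eigenvalue negbK => /eqP->; rewrite mul0mx.
rewrite mulmxBr mulmx1 mulmx_sumr.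
under eq_bigr do rewrite (eigenspace_mulmx_eigenproj _ (submx_refl _)).
by rewrite -big_mkcond big_pred1_eq subrr.
Qed.

Lemma expr_spectral c : A ^+ c = \sum_r theta r ^+ c *: E r.
Proof.
elim: c => [|c IH].
  by rewrite expr0 -[1]/(1%:M) -sum_eigenproj; apply: eq_bigr => r _; rewrite scale1r.
rewrite exprSr IH -mulmxE mulmx_suml; apply: eq_bigr => r _.
by rewrite -scalemxAl eigenproj_mulmx scalerA exprSr.
Qed.

End SpectralDecomposition.

Definition int_comb (R : pzRingType) k (z : 'I_k -> R) (m : {ffun 'I_k -> int}) :
    R :=
  \sum_(j < k) (m j)%:~R * z j.

Lemma int_comb_is_zmod_morphism (R : pzRingType) k (z : 'I_k -> R) :
  zmod_morphism (int_comb z).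
Proof.
move=> m m'; rewrite /int_comb -sumrB; apply: eq_bigr => j _.
by rewrite !ffunE intrB mulrBl.
Qed.

HB.instance Definition _ (R : pzRingType) k (z : 'I_k -> R) :=
  GRing.isZmodMorphism.Build _ _ (int_comb z) (int_comb_is_zmod_morphism z).

Lemma int_comb_eq0 (R : realType) k (w : 'I_k -> R) (m : {ffun 'I_k -> int}) :
  Q_lin_indep w -> (int_comb w m == 0) = (m == 0).
Proof.
move=> w_indep; apply/eqP/eqP => [m0|->]; last exact: raddf0.
apply/ffunP => j; rewrite ffunE; apply/eqP; rewrite -(intr_eq0 rat); apply/eqP.
apply: (w_indep (fun i => (m i)%:~R)); rewrite -[RHS]m0.
by apply: eq_bigr => i _; rewrite ratr_int.
Qed.

Lemma torus_int_dconv_cos (R : realType) (I : finType) (x : I -> R) k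
    (g : I -> {ffun 'I_k -> int}) cs :
  torus_int k (fun z =>
    dconv x g cs (fun m => cos (int_comb (fun j => nth 0 z j) m))) =
  (pi *+ 2) ^+ k * dconv x g cs (fun m => (m == 0)%:R).
Proof.
have [s [_ sE]] :=
  dconv_expand x cs (g := g) (P := fun _ => True) Logic.I (fun _ _ _ _ => Logic.I).
transitivity (torus_int k (fun z => \sum_(p <- s) p.1 *
    cos (\sum_(j < k) (p.2 j)%:~R * nth 0 z j + 0))).
  congr torus_int; apply: funext => z.
  by rewrite sE; apply: eq_bigr => p _; rewrite addr0.
rewrite torus_int_sum_cos sE; congr (_ * _); apply: eq_bigr => p _.
rewrite cos0 mulr1; congr (_ * _).
have [/forallP m0|/forallPn[j mj]] := boolP [forall j, p.2 j == 0].
  rewrite big1; last by move=> j _; rewrite (eqP (m0 j)).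
  suff -> : p.2 = 0 by rewrite eqxx.
  by apply/ffunP => j; rewrite ffunE; exact/eqP.
rewrite (bigD1 j) //= (negPf mj) mul0r.
suff -> : (p.2 == 0) = false by [].
by apply: contraNF mj => /eqP->; rewrite ffunE.
Qed.

Lemma eigenvalue_map_algebraic (F K : fieldType) (f : {rmorphism F -> K}) n
    (M : 'M[F]_n) t :
  eigenvalue (map_mx f M) t -> algebraicOver f t.
Proof.
rewrite eigenvalue_root_char -map_char_poly => t_root.
by exists (char_poly M); first exact/monic_neq0/char_poly_monic.
Qed.

Lemma adjmx_ratr (R : numFieldType) n (e : rel 'I_n) :
  adjmx R e = map_mx ratr (adjmx rat e).
Proof. by apply/matrixP => i j; rewrite !mxE ratr_nat. Qed.

Section AdjacencySpectrum.
Variables (R : rcfType) (n : nat) (e : rel 'I_n.+1) (d : nat)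
  (theta : 'I_d.+1 -> R) (E : 'I_d.+1 -> 'M[R]_n.+1).
Hypotheses (e_sym : forall i j, e i j = e j i) (theta_inj : injective theta)
  (theta_ev : forall r, eigenvalue (adjmx R e) (theta r))
  (theta_all : forall t, eigenvalue (adjmx R e) t -> exists r, theta r = t)
  (E_proj : forall r, orth_proj (E r) (eigenspace (adjmx R e) (theta r))).

Lemma adjmx_eigenvalue_algebraic r : algebraicOver ratr (theta r).
Proof. by have := theta_ev r; rewrite adjmx_ratr; exact: eigenvalue_map_algebraic. Qed.

Lemma adjmx_moment_rational a b c : \sum_r E r a b * theta r ^+ c \in rational.
Proof.
have symA : (adjmx R e)^T = adjmx R e by apply/matrixP => i j; rewrite !mxE e_sym.
suff -> : \sum_r E r a b * theta r ^+ c = map_mx ratr (adjmx rat e ^+ c) a b.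
  by rewrite mxE rational_ratr.
rewrite rmorphXn /= -adjmx_ratr (expr_spectral symA theta_inj theta_all E_proj).
by rewrite summxE; apply: eq_bigr => r _; rewrite mxE mulrC.
Qed.

End AdjacencySpectrum.

Theorem theorem5p2 (R : realType) (n : nat) (e : rel 'I_n)
    (d : nat) (theta : 'I_d.+1 -> R) (E : 'I_d.+1 -> 'M[R]_n)
    (k : nat) (w : 'I_k -> R) (f : 'I_d.+1 -> 'I_k -> int)
    (a b : 'I_n) (l : nat) :
  simple_graph e ->
  (* theta_0, ..., theta_d are the distinct eigenvalues of A *)
  injective theta ->
  (forall r, eigenvalue (adjmx R e) (theta r)) ->
  (forall x : R, eigenvalue (adjmx R e) x -> exists r, theta r = x) ->
  (* E_r is the orthogonal projection onto the theta_r-eigenspace *)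
  (forall r, orth_proj (E r) (eigenspace (adjmx R e) (theta r))) ->
  (* w_1, ..., w_k linearly independent over Q, theta_r = sum_l f^r_l w_l *)
  Q_lin_indep w ->
  (forall r, theta r = \sum_(j < k) (f r j)%:~R * w j) ->
  (1 <= l)%N ->
  let F := fun z : seq R =>
    \sum_(r < d.+1) ((E r a b)%:C * expi (\sum_(j < k) (f r j)%:~R * nth 0 z j))%C in
  exists q : rat,
    ((pi *+ 2) ^+ k)^-1 * torus_int k (fun z => cmod (F z) ^+ (2 * l)) = ratr q.
Proof.
case: n e E a b => [|n] e E a b; first by case: a.
move=> [e_sym _] theta_inj theta_ev theta_all E_proj w_indep theta_comb _ F.
pose x r : R := E r a b.
pose fv r : {ffun 'I_k -> int} := [ffun j => f r j].
have theta_fv : theta = int_comb w \o fv.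
  by apply: funext => r; rewrite theta_comb; apply: eq_bigr => j _; rewrite ffunE.
pose cs : seq int := nseq l 1 ++ nseq l (-1).
have integrand z : cmod (F z) ^+ (2 * l) =
    dconv x fv cs (fun m => cos (int_comb (fun j => nth 0 z j) m)).
  rewrite cmodX_sum_expi -(dconv_comp _ (int_comb _)); congr dconv.
  by apply: funext => r; apply: eq_bigr => j _; rewrite ffunE.
have zero_freq : dconv x fv cs (fun m => (m == 0)%:R) =
    dconv x theta cs (fun t => (t == 0)%:R).
  rewrite theta_fv dconv_comp; congr dconv.
  by apply: funext => m /=; rewrite int_comb_eq0.
have /asboolP[q qE] := dconv_eq0_rational
  (adjmx_moment_rational e_sym theta_inj theta_all E_proj a b)
  (adjmx_eigenvalue_algebraic theta_ev) cs.
exists q; rewrite -qE -zero_freq.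
under eq_fun do rewrite integrand.
by rewrite torus_int_dconv_cos mulKf // expf_neq0 // gt_eqF // mulrn_wgt0 // pi_gt0.
Qed.
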